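(* Let $d\ge2$, $(S,\mathfrak n,\mathbf k)$ a complete regular local ring with $\mathbf k$ algebraically closed of characteristic not dividing $d$, $0\ne f\in\mathfrak n^2$, and $R^\sharp=S[[z]]/(f+z^d)$. Let $N$ be a maximal Cohen-Macaulay $R^\sharp$-module and $X\in\mathrm{MF}_S^d(f)$. Then $X^{\sharp\flat}\cong\bigoplus_{k\in\mathbb Z_d}T^k(X)$ in $\mathrm{MF}_S^d(f)$ and $N^{\flat\sharp}\cong\bigoplus_{k\in\mathbb Z_d}(\sigma^k)^*N$ as $R^\sharp$-modules.
   Context: $\mathrm{MF}_S^d(f)$ is the category of matrix factorizations of $f$ with $d$ factors: objects are $X=(\phi_1:F_2\to F_1,\dots,\phi_d:F_1\to F_d)$, $F_i$ finitely generated free $S$-modules of equal rank, with $\phi_1\cdots\phi_d=f\cdot1_{F_1}$; morphisms $(\alpha_1,\dots,\alpha_d)$, $\alpha_i:F_i\to F_i'$, with $\alpha_i\phi_i=\phi_i'\alpha_{i+1}$ (indices mod $d$). The shift functor is $T(\phi_1,\dots,\phi_d)=(\phi_2,\dots,\phi_d,\phi_1)$. A maximal Cohen-Macaulay (MCM) $R^\sharp$-module is the same as a finitely generated $R^\sharp$-module that is free over $S$. Fix $\mu\in S$ with $\mu^d=-1$ and a primitive $d$th root of unity $\omega\in S$ (these exist). For an MCM $R^\sharp$-module $N$ with $\phi:N\to N$ the $S$-linear map given by multiplication by $z$, set $N^\flat=(\mu\phi,\mu\phi,\dots,\mu\phi)\in\mathrm{MF}_S^d(f)$. For $X=(\phi_1,\dots,\phi_d)$,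 $X^\sharp$ is the $S$-module $F_d\oplus F_{d-1}\oplus\cdots\oplus F_1$ with $z\cdot(x_d,x_{d-1},\dots,x_1)=(\mu^{-1}\phi_d(x_1),\mu^{-1}\phi_{d-1}(x_d),\dots,\mu^{-1}\phi_1(x_2))$, an MCM $R^\sharp$-module. $\sigma:R^\sharp\to R^\sharp$ is the automorphism fixing $S$ with $\sigma(z)=\omega z$, and $(\sigma^k)^*N$ denotes $N$ with scalars restricted along $\sigma^k$. *)

From HB Require Import structures.
From mathcomp Require Import all_boot all_order all_algebra.
Set Implicit Arguments. Unset Strict Implicit. Unset Printing Implicit Defensive.
Import Order.TTheory GRing.Theory Num.Theory.
Local Open Scope ring_scope.

Section CommAlg.
Variable S : comUnitRingType.

Definition is_ideal (I : S -> Prop) : Prop :=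
  [/\ I 0, (forall x y, I x -> I y -> I (x + y)) & (forall a x, I x -> I (a * x))].

Definition gen_by (I : S -> Prop) (s : seq S) : Prop :=
  forall x, I x <-> exists c : 'I_(size s) -> S, x = \sum_(i < size s) c i * s`_i.

Definition noetherian : Prop :=
  forall I, is_ideal I -> exists s, gen_by I s.

(* local ring: the non-units form an ideal (the maximal ideal n) *)
Definition local_ring : Prop :=
  forall x y : S, x \notin GRing.unit -> y \notin GRing.unit -> (x + y) \notin GRing.unit.

Definition maxl : S -> Prop := fun x => x \notin GRing.unit.

Fixpoint ideal_pow (I : S -> Prop) (k : nat) : S -> Prop :=
  match k with
  | 0 => fun _ => True
  | k'.+1 => fun x => exists (m : nat) (a b : 'I_m -> S),
      [/\ forall i, I (a i), forall i, ideal_pow I k' (b i) & x = \sum_(i < m) a i * b i]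
  end.

(* complete (and separated) in the n-adic topology *)
Definition adic_complete (I : S -> Prop) : Prop :=
  (forall x, (forall k, ideal_pow I k x) -> x = 0) /\
  forall u : nat -> S,
    (forall k, exists N, forall i j, (N <= i)%N -> (N <= j)%N -> ideal_pow I k (u i - u j)) ->
    exists L, forall k, exists N, forall i, (N <= i)%N -> ideal_pow I k (L - u i).

Definition prime_ideal (P : S -> Prop) : Prop :=
  [/\ is_ideal P, ~ P 1 & forall x y, P (x * y) -> P x \/ P y].

Definition prime_chain (n : nat) : Prop :=
  exists c : nat -> S -> Prop,
    (forall i, (i <= n)%N -> prime_ideal (c i)) /\
    (forall i, (i < n)%N -> (forall x, c i x -> c i.+1 x) /\ exists x, c i.+1 x /\ ~ c i x).

Definition krull_dim (n : nat) : Prop := prime_chain n /\ ~ prime_chain n.+1.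

Definition emb_dim (e : nat) : Prop :=
  (exists s, size s = e /\ gen_by maxl s) /\ (forall s, gen_by maxl s -> (e <= size s)%N).

Definition complete_regular_local : Prop :=
  [/\ local_ring, noetherian, adic_complete maxl & exists e, emb_dim e /\ krull_dim e].

(* residue field S/n algebraically closed: every monic nonconstant
   polynomial over S has a root modulo n *)
Definition residue_alg_closed : Prop :=
  forall p : {poly S}, p \is monic -> (1 < size p)%N -> exists x, maxl p.[x].

(* char of the residue field does not divide d  <=>  d is nonzero in S/n *)
Definition residue_char_not_dvd (d : nat) : Prop := (d%:R : S) \is a GRing.unit.

End CommAlg.

Definition addI (d : nat) (i : 'I_d) (k : nat) : 'I_d :=
  Ordinal (ltn_pmod (i + k) (leq_ltn_trans (leq0n i) (ltn_ord i))).

Section MF.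
Variables (S : comUnitRingType) (d : nat).

(* X = (phi 0, ..., phi (d-1)) = (phi_1, ..., phi_d), all F_i = S^r (column vectors),
   phi_i : F_{i+1} -> F_i; object of MF^d_S(f) *)
Definition is_MF (r : nat) (f : S) (phi : 'I_d -> 'M[S]_r) : Prop :=
  \prod_(i < d) phi i = f%:M.

Definition MF_iso (r : nat) (phi psi : 'I_d -> 'M[S]_r) : Prop :=
  exists alpha : 'I_d -> 'M[S]_r,
    (forall i, alpha i \in unitmx) /\ (forall i, alpha i *m phi i = psi i *m alpha (addI i 1)).

Definition MF_shift (r : nat) (k : nat) (phi : 'I_d -> 'M[S]_r) : 'I_d -> 'M[S]_r :=
  fun i => phi (addI i k).

Definition MF_sum_shifts (r : nat) (phi : 'I_d -> 'M[S]_r)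
  : 'I_d -> 'M[S]_(\sum_(k < d) (fun _ : 'I_d => r) k) :=
  fun i => mxdiag (fun k : 'I_d => MF_shift k phi i).

(* MCM R#-module, R# = S[[z]]/(f + z^d): free S-module S^r with z acting by
   phi, subject to phi^d = -f *)
Definition is_MCM (r : nat) (f : S) (phi : 'M[S]_r) : Prop := phi ^+ d = - f%:M.

Definition Rsharp_iso (r : nat) (A B : 'M[S]_r) : Prop :=
  exists P : 'M[S]_r, P \in unitmx /\ P *m A = B *m P.

Definition flat (mu : S) (r : nat) (phi : 'M[S]_r) : 'I_d -> 'M[S]_r :=
  fun _ => mu *: phi.

(* X^sharp = F_d (+) F_{d-1} (+) ... (+) F_1: block position p holds F_{d-p};
   z sends block p-1 (mod d) to block p via mu^-1 phi_{d-p} *)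
Definition sharp (mu : S) (r : nat) (phi : 'I_d -> 'M[S]_r)
  : 'M[S]_(\sum_(k < d) (fun _ : 'I_d => r) k) :=
  mxblock (fun p q : 'I_d => if p == addI q 1 then mu^-1 *: phi (rev_ord p) else 0).

(* direct sum over k in Z_d of (sigma^k)^* N: z acts by omega^k phi *)
Definition sum_twists (omega : S) (r : nat) (phi : 'M[S]_r)
  : 'M[S]_(\sum_(k < d) (fun _ : 'I_d => r) k) :=
  mxdiag (fun k : 'I_d => omega ^+ k *: phi).

End MF.

(* Both isomorphisms are explicit block matrices over blocks indexed by Z_d.
   After the scalars mu cancel, (X^#)^b is the block matrix whose only nonzero
   blocks X_{-q-2} sit at (q+1, q); conjugating by the block permutation
   q |-> -1-q-i turns its i-th factor into diag_k X_{i+k}, the i-th factor of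
   the sum of the T^k X.  Likewise (N^b)^# is the cyclic block shift with
   blocks phi, and the discrete Fourier transform with blocks omega^(kp)
   diagonalises it into diag_k (omega^k phi).  The Fourier matrix has inverse
   (d^-1 omega^(-lk)), because in a local ring where d is a unit the powers of
   a d-th root of unity z <> 1 sum to 0: (z - 1) * sum_k z^k = 0, and if z - 1
   is not a unit then sum_k z^k, congruent to d modulo z - 1, is one. *)

From HB Require Import structures.
From mathcomp Require Import all_boot all_order all_algebra.
From mathcomp Require Import ring.
Set Implicit Arguments. Unset Strict Implicit. Unset Printing Implicit Defensive.
Import GRing.Theory.
Local Open Scope ring_scope.

Section MonomialBlockMatrix.
Variables (R : pzRingType) (m r : nat).

Definition mxmonomial (g : 'I_m -> 'I_m) (A : 'I_m -> 'M[R]_r)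
  : 'M[R]_(\sum_(k < m) (fun _ : 'I_m => r) k) :=
  \mxblock_(p, q) (if p == g q then A q else 0).

Lemma eq_mxmonomial g g' A A' :
  g =1 g' -> A =1 A' -> mxmonomial g A = mxmonomial g' A'.
Proof. by move=> eq_g eq_A; apply: eq_mxblock => p q; rewrite eq_g eq_A. Qed.

Lemma mxdiag_mxmonomial (D : 'I_m -> 'M[R]_r) : \mxdiag_k D k = mxmonomial id D.
Proof.
by apply: eq_mxblock => p q; case: eqP => [->|//]; rewrite conform_mx_id.
Qed.

Lemma mxmonomial1 : mxmonomial id (fun _ => 1%:M) = 1%:M.
Proof. by rewrite -mxdiag_mxmonomial mxdiagZ. Qed.

Lemma scale_mxmonomial a g A :
  a *: mxmonomial g A = mxmonomial g (fun q => a *: A q).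
Proof.
by apply/matrixP => i j; rewrite !mxE; case: eqP => _; rewrite !mxE ?mulr0.
Qed.

Lemma mul_mxblock_mxmonomial (B : 'I_m -> 'I_m -> 'M[R]_r) g A :
  \mxblock_(k, p) B k p *m mxmonomial g A = \mxblock_(k, q) (B k (g q) *m A q).
Proof.
rewrite mul_mxblock; apply: eq_mxblock => k q.
rewrite (bigD1 (g q)) //= eqxx big1 ?addr0 // => p /negPf ->.
exact: mulmx0.
Qed.

Lemma mul_mxmonomial g h A B :
  mxmonomial g A *m mxmonomial h B
  = mxmonomial (g \o h) (fun q => A (h q) *m B q).
Proof.
rewrite mul_mxblock_mxmonomial; apply: eq_mxblock => p q /=.
by case: eqP => _; rewrite ?mul0mx.
Qed.

End MonomialBlockMatrix.

Lemma mxmonomial_unit (R : comUnitRingType) m r (g h : 'I_m -> 'I_m) :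
  cancel h g -> mxmonomial g (fun _ => 1%:M : 'M[R]_r) \in unitmx.
Proof.
move=> hK; pose one (_ : 'I_m) : 'M[R]_r := 1%:M.
have gh1 : mxmonomial g one *m mxmonomial h one = 1%:M.
  rewrite mul_mxmonomial -mxmonomial1.
  by apply: eq_mxmonomial => q; rewrite /= ?hK ?mulmx1.
by case: (mulmx1_unit gh1).
Qed.

Lemma addIE n (i : 'I_n.+2) (k : nat) : addI i k = i + k%:R.
Proof. by apply: val_inj; rewrite /= Zp_nat /= modnDmr. Qed.

Lemma rev_ordE n (p : 'I_n.+2) : rev_ord p = - (p + 1).
Proof.
apply/eqP; rewrite -addr_eq0; apply/eqP/val_inj => /=.
by rewrite (modn_small (_ : 1 < n.+2)%N) // modnDmr addn1 subnK ?modnn.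
Qed.

Lemma sharpE (S : comUnitRingType) d (mu : S) s (X : 'I_d -> 'M[S]_s) :
  sharp mu X =
  mxmonomial (fun q => addI q 1) (fun q => mu^-1 *: X (rev_ord (addI q 1))).
Proof. by apply: eq_mxblock => p q; case: eqP => [->|]. Qed.

Lemma flat_sharp_MF_iso (S : comUnitRingType) n (mu : S) s
    (X : 'I_n.+2 -> 'M[S]_s) :
  mu \is a GRing.unit -> MF_iso (flat mu (sharp mu X)) (MF_sum_shifts X).
Proof.
move=> mu_unit.
pose g (i q : 'I_n.+2) := -1 - q - i.
have gK i : involutive (g i) by move=> q; rewrite /g; ring.
exists (fun i => mxmonomial (g i) (fun _ => 1%:M)); split=> [i|i].
  exact: mxmonomial_unit (gK i).
rewrite /flat /MF_sum_shifts sharpE scale_mxmonomial mxdiag_mxmonomial.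
rewrite !mul_mxmonomial; apply: eq_mxmonomial => q.
  by rewrite /= /g !addIE; ring.
rewrite mul1mx mulmx1 scalerA mulrV // scale1r /MF_shift.
by congr X; rewrite rev_ordE !addIE natr_Zp /g; ring.
Qed.

Lemma local_geometric_sum_eq0 (S : comUnitRingType) n (z : S) :
  local_ring S -> (n%:R : S) \is a GRing.unit -> z ^+ n = 1 -> z != 1 ->
  \sum_(k < n) z ^+ k = 0.
Proof.
move=> loc n_unit zn1 z_neq1; set G := \sum_(k < n) z ^+ k.
have zG : (z - 1) * G = 0 by rewrite -subrX1 zn1 subrr.
have GnE : G - n%:R = (z - 1) * \sum_(k < n) \sum_(i < k) z ^+ i.
  have -> : n%:R = \sum_(k < n) (1 : S) by rewrite sumr_const card_ord.
  by rewrite -sumrB mulr_sumr; apply: eq_bigr => k _; apply: subrX1.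
have [z1_unit | z1_nunit] := boolP (z - 1 \is a GRing.unit).
  by apply: (mulrI z1_unit); rewrite zG mulr0.
have G_unit : G \is a GRing.unit.
  apply: contraT => G_nunit.
  suff : (n%:R : S) \notin GRing.unit by rewrite n_unit.
  have -> : n%:R = G + - (G - n%:R) by rewrite opprB addrC subrK.
  by apply: loc => //; rewrite unitrN GnE unitrM negb_and z1_nunit.
have : z - 1 = 0 by apply: (mulIr G_unit); rewrite mul0r.
by move/eqP; rewrite subr_eq0 (negPf z_neq1).
Qed.

Lemma sum_prim_root_ratio_expr (S : comUnitRingType) n (omega : S)
    (l m : 'I_n) :
  local_ring S -> (n%:R : S) \is a GRing.unit -> n.-primitive_root omega ->
  \sum_(k < n) ((omega ^+ l)^-1 * omega ^+ m) ^+ k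
  = if l == m then n%:R else 0.
Proof.
move=> loc n_unit prim.
have om_unit : omega \is a GRing.unit.
  by rewrite -(unitrX_pos _ (prim_order_gt0 prim)) (prim_expr_order prim) unitr1.
case: eqP => [->|neq_lm].
  rewrite mulVr ?unitrX // (eq_bigr (fun=> 1)) => [|k _]; last exact: expr1n.
  by rewrite sumr_const card_ord.
apply: local_geometric_sum_eq0 => //.
  rewrite exprMn exprVn -!exprM ![(_ * n)%N]mulnC !exprM (prim_expr_order prim).
  by rewrite !expr1n invr1 mulr1.
apply/eqP => ratio1; apply: neq_lm; apply/val_inj/eqP.
have : omega ^+ l == omega ^+ m.
  by rewrite -[omega ^+ m](mulVKr (unitrX l om_unit)) ratio1 mulr1.
by rewrite (eq_prim_root_expr prim) !modn_small.
Qed.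

Definition dft_blockmx (S : pzRingType) n r (omega : S)
  : 'M[S]_(\sum_(k < n) (fun _ : 'I_n => r) k) :=
  \mxblock_(k, p) ((omega ^+ (k * p))%:M : 'M_r).

Lemma dft_blockmx_unit (S : comUnitRingType) n r (omega : S) :
  local_ring S -> (n%:R : S) \is a GRing.unit -> n.-primitive_root omega ->
  dft_blockmx n r omega \in unitmx.
Proof.
move=> loc n_unit prim.
pose inv :=
  \mxblock_(l < n, k < n) ((n%:R^-1 * (omega ^+ l)^-1 ^+ k)%:M : 'M[S]_r).
suff : inv *m dft_blockmx n r omega = 1%:M by case/mulmx1_unit.
rewrite mul_mxblock -mxmonomial1; apply: eq_mxblock => l m /=.
rewrite (_ : \sum_(k < n) _ =
    (n%:R^-1 * \sum_(k < n) ((omega ^+ l)^-1 * omega ^+ m) ^+ k)%:M).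
  rewrite sum_prim_root_ratio_expr //.
  by case: eqP => _; rewrite ?mulVr ?mulr0 ?raddf0.
rewrite mulr_sumr raddf_sum; apply: eq_bigr => k _.
by rewrite -scalar_mxM exprMn mulnC exprM mulrA.
Qed.

Lemma dft_mul_sharp_flat (S : comUnitRingType) n (mu omega : S) r
    (phi : 'M[S]_r) :
  mu \is a GRing.unit -> n.-primitive_root omega ->
  dft_blockmx n r omega *m sharp mu (@flat S n mu _ phi)
  = sum_twists n omega phi *m dft_blockmx n r omega.
Proof.
move=> mu_unit prim.
rewrite sharpE mul_mxblock_mxmonomial mul_mxdiag_mxblock.
apply: eq_mxblock => k q.
rewrite /flat scalerA mulVr // scale1r mul_scalar_mx mul_mx_scalar scalerA.
congr (_ *: _); rewrite /= mulnC exprM (prim_expr_mod prim) -exprM.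
by rewrite mulnC mulnDr muln1 exprD.
Qed.

Theorem proposition2p4
  (d : nat) (S : comUnitRingType) (f mu omega : S)
  (r : nat) (phiN : 'M[S]_r) (s : nat) (X : 'I_d -> 'M[S]_s) :
  (2 <= d)%N ->
  complete_regular_local S ->
  residue_alg_closed S ->
  residue_char_not_dvd S d ->
  f != 0 ->
  ideal_pow (@maxl S) 2 f ->
  mu ^+ d = -1 ->
  d.-primitive_root omega ->
  is_MCM d f phiN ->
  is_MF f X ->
  MF_iso (@flat S d mu _ (sharp mu X)) (MF_sum_shifts X)
  /\ Rsharp_iso (sharp mu (@flat S d mu _ phiN)) (sum_twists d omega phiN).
Proof.
case: d X => [|[|n]] X // _ [loc _ _ _] _ d_unit _ _ mu_d prim _ _.
have mu_unit : mu \is a GRing.unit.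
  by rewrite -(unitrX_pos _ (ltn0Sn n.+1)) mu_d unitrN1.
split; first exact: flat_sharp_MF_iso.
exists (dft_blockmx n.+2 r omega); split; first exact: dft_blockmx_unit.
exact: dft_mul_sharp_flat.
Qed.
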